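(* Let $\mathcal{A},\mathcal{C}$ be small categories and $\Gamma,P:\mathcal{A}^{op}\times\mathcal{A}\times\mathcal{C}^{op}\times\mathcal{C}\to\mathbf{Set}$ functors. Let $\alpha,\beta$ be dinatural transformations, dinatural in $(a,b,x)\in\mathcal{A}^{op}\times\mathcal{A}\times\mathcal{C}$, from $(a',b',x',a,b,x)\mapsto\hom_{\mathcal{A}}(a,b)\times\Gamma(b',a',x',x)$ to $(a',b',x',a,b,x)\mapsto P(a,b,x',x)$, with components $\alpha_{a,b,x},\beta_{a,b,x}:\hom_{\mathcal{A}}(a,b)\times\Gamma(b,a,x,x)\to P(a,b,x,x)$. If $\alpha_{z,z,x}(\mathrm{id}_z,k)=\beta_{z,z,x}(\mathrm{id}_z,k)$ for all $z\in\mathcal{A}$, $x\in\mathcal{C}$, $k\in\Gamma(z,z,x,x)$, then $\alpha_{a,b,x}(e,k)=\beta_{a,b,x}(e,k)$ for all $a,b\in\mathcal{A}$, $x\in\mathcal{C}$, $e\in\hom_{\mathcal{A}}(a,b)$, $k\in\Gamma(b,a,x,x)$.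
   Context: For difunctors $F,G:\mathcal{B}^{op}\times\mathcal{B}\to\mathcal{D}$, a dinatural transformation is a family $\alpha_x:F(x,x)\to G(x,x)$ such that for every $f:a\to b$: $G(f,\mathrm{id}_b)\circ\alpha_b\circ F(\mathrm{id}_b,f)=G(\mathrm{id}_a,f)\circ\alpha_a\circ F(f,\mathrm{id}_a)$. For $\mathcal{B}$ a product category arguments are reordered freely; primed arguments are the contravariant ones. *)

Record Category := {
  ob :> Type;
  hom : ob -> ob -> Type;
  idm : forall a, hom a a;
  comp : forall a b c, hom b c -> hom a b -> hom a c;
  comp_id_l : forall a b (f : hom a b), comp a b b (idm b) f = f;
  comp_id_r : forall a b (f : hom a b), comp a a b f (idm a) = f;
  comp_assoc : forall a b c d (f : hom a b) (g : hom b c) (h : hom c d),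
      comp a c d h (comp a b c g f) = comp a b d (comp b c d h g) f }.

Arguments hom {_} _ _.
Arguments idm {_} _.
Arguments comp {_ _ _ _} _ _.

Definition op (C : Category) : Category.
Proof.
  refine {| ob := ob C; hom a b := @hom C b a; idm a := @idm C a;
            comp a b c g f := @comp C c b a f g |}.
  - intros; apply comp_id_r.
  - intros; apply comp_id_l.
  - intros; symmetry; apply comp_assoc.
Defined.

Definition prod (C D : Category) : Category.
Proof.
  refine {| ob := (ob C * ob D)%type;
            hom x y := (@hom C (fst x) (fst y) * @hom D (snd x) (snd y))%type;
            idm x := (@idm C (fst x), @idm D (snd x));
            comp x y z g f := (comp (fst g) (fst f), comp (snd g) (snd f)) |}.
  - intros a b [f1 f2]; simpl; rewrite !comp_id_l; reflexivity.
  - intros a b [f1 f2]; simpl; rewrite !comp_id_r; reflexivity.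
  - intros a b c d [f1 f2] [g1 g2] [h1 h2]; simpl; rewrite !comp_assoc; reflexivity.
Defined.

Record SetFunctor (C : Category) := {
  fobj : ob C -> Type;
  fmap : forall a b, @hom C a b -> fobj a -> fobj b;
  fmap_id : forall a (x : fobj a), fmap a a (idm a) x = x;
  fmap_comp : forall a b c (f : hom a b) (g : hom b c) (x : fobj a),
      fmap a c (comp g f) x = fmap b c g (fmap a b f x) }.

Arguments fobj {_} _ _.
Arguments fmap {_} _ {_ _} _ _.

Definition is_dinatural (B : Category) (F G : SetFunctor (prod (op B) B))
  (al : forall b : ob B, fobj F ((b, b) : ob (prod (op B) B)) -> fobj G ((b, b) : ob (prod (op B) B))) : Prop :=
  forall (a b : ob B) (f : @hom B a b) (y : fobj F ((b, a) : ob (prod (op B) B))),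
    @fmap _ G ((b, b) : ob (prod (op B) B)) ((a, b) : ob (prod (op B) B))
      ((f, @idm B b) : @hom (prod (op B) B) (b, b) (a, b))
      (al b (@fmap _ F ((b, a) : ob (prod (op B) B)) ((b, b) : ob (prod (op B) B))
               ((@idm (op B) b, f) : @hom (prod (op B) B) (b, a) (b, b)) y))
    = @fmap _ G ((a, a) : ob (prod (op B) B)) ((a, b) : ob (prod (op B) B))
      ((@idm (op B) a, f) : @hom (prod (op B) B) (a, a) (a, b))
      (al a (@fmap _ F ((b, a) : ob (prod (op B) B)) ((a, a) : ob (prod (op B) B))
               ((f, @idm B a) : @hom (prod (op B) B) (b, a) (a, a)) y)).

Record Dinatural (B : Category) (F G : SetFunctor (prod (op B) B)) := {
  dcomp :> forall b : ob B, fobj F ((b, b) : ob (prod (op B) B)) -> fobj G ((b, b) : ob (prod (op B) B));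
  dcomp_dinat : is_dinatural B F G dcomp }.

Definition Bcat (A C : Category) : Category := prod (prod (op A) A) C.
Definition Dcat (A C : Category) : Category := prod (prod (prod (op A) A) (op C)) C.

(* The difunctor ((a',b',x'),(a,b,x)) |-> hom_A(a,b) x Gamma(b',a',x',x) *)
Definition HomGamma (A C : Category) (Gam : SetFunctor (Dcat A C))
  : SetFunctor (prod (op (Bcat A C)) (Bcat A C)).
Proof.
  refine {| fobj (p : ob (prod (op (Bcat A C)) (Bcat A C))) := (@hom A (fst (fst (snd p))) (snd (fst (snd p)))
                       * fobj Gam ((((snd (fst (fst p)), fst (fst (fst p))), snd (fst p)), snd (snd p))
                                   : ob (Dcat A C)))%type;
            fmap (p q : ob (prod (op (Bcat A C)) (Bcat A C))) (m : @hom (prod (op (Bcat A C)) (Bcat A C)) p q) y :=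
              (comp (comp (snd (fst (snd m))) (fst y)) (fst (fst (snd m))),
               @fmap _ Gam
                 ((((snd (fst (fst p)), fst (fst (fst p))), snd (fst p)), snd (snd p)) : ob (Dcat A C))
                 ((((snd (fst (fst q)), fst (fst (fst q))), snd (fst q)), snd (snd q)) : ob (Dcat A C))
                 ((((snd (fst (fst m)), fst (fst (fst m))), snd (fst m)), snd (snd m))
                   : @hom (Dcat A C)
                       ((((snd (fst (fst p)), fst (fst (fst p))), snd (fst p)), snd (snd p)) : ob (Dcat A C))
                       ((((snd (fst (fst q)), fst (fst (fst q))), snd (fst q)), snd (snd q)) : ob (Dcat A C)))
                 (snd y)) |}.
  - intros p [e k]; simpl. rewrite comp_id_l, comp_id_r. f_equal.
    exact (fmap_id _ Gam _ k).
  - intros p q r f g [e k]; simpl. f_equal.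
    + rewrite !comp_assoc; reflexivity.
    + destruct p as [[[p1 p2] p3] [[p4 p5] p6]], q as [[[q1 q2] q3] [[q4 q5] q6]],
        r as [[[r1 r2] r3] [[r4 r5] r6]],
        f as [[[f1 f2] f3] [[f4 f5] f6]], g as [[[g1 g2] g3] [[g4 g5] g6]]; simpl in *.
      exact (fmap_comp _ Gam (((p2, p1), p3), p6) (((q2, q1), q3), q6) (((r2, r1), r3), r6)
               (((f2, f1), f3), f6) (((g2, g1), g3), g6) k).
Defined.

(* The difunctor ((a',b',x'),(a,b,x)) |-> P(a,b,x',x) *)
Definition PDi (A C : Category) (P : SetFunctor (Dcat A C))
  : SetFunctor (prod (op (Bcat A C)) (Bcat A C)).
Proof.
  refine {| fobj (p : ob (prod (op (Bcat A C)) (Bcat A C))) := fobj P ((((fst (fst (snd p)), snd (fst (snd p))), snd (fst p)), snd (snd p))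
                              : ob (Dcat A C));
            fmap (p q : ob (prod (op (Bcat A C)) (Bcat A C))) (m : @hom (prod (op (Bcat A C)) (Bcat A C)) p q) y :=
              @fmap _ P
                 ((((fst (fst (snd p)), snd (fst (snd p))), snd (fst p)), snd (snd p)) : ob (Dcat A C))
                 ((((fst (fst (snd q)), snd (fst (snd q))), snd (fst q)), snd (snd q)) : ob (Dcat A C))
                 ((((fst (fst (snd m)), snd (fst (snd m))), snd (fst m)), snd (snd m))
                   : @hom (Dcat A C)
                       ((((fst (fst (snd p)), snd (fst (snd p))), snd (fst p)), snd (snd p)) : ob (Dcat A C))
                       ((((fst (fst (snd q)), snd (fst (snd q))), snd (fst q)), snd (snd q)) : ob (Dcat A C))) y |}.
  - intros p y; exact (fmap_id _ P _ y).
  - intros p q r f g y.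
    destruct p as [[[p1 p2] p3] [[p4 p5] p6]], q as [[[q1 q2] q3] [[q4 q5] q6]],
        r as [[[r1 r2] r3] [[r4 r5] r6]],
        f as [[[f1 f2] f3] [[f4 f5] f6]], g as [[[g1 g2] g3] [[g4 g5] g6]]; simpl in *.
    exact (fmap_comp _ P (((p4, p5), p3), p6) (((q4, q5), q3), q6) (((r4, r5), r3), r6)
               (((f4, f5), f3), f6) (((g4, g5), g3), g6) y).
Defined.


(* Dinaturality along the morphism (b,b,x) -> (a,b,x) given by [e] in the
   contravariant A-coordinate, evaluated at (id_b, k), has (e, k) on the
   covariant side and (id_b, k') on the contravariant side, while P does not
   see this morphism at all; so agreement on identities propagates to [e]. *)

Lemma dinatural_agree_transfer (B : Category) (F G : SetFunctor (prod (op B) B))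
  (al be : Dinatural B F G) (a b : ob B) (f : @hom B a b)
  (y : fobj F ((b, a) : ob (prod (op B) B))) :
  al a (@fmap _ F ((b, a) : ob (prod (op B) B)) ((a, a) : ob (prod (op B) B))
          ((f, @idm B a) : @hom (prod (op B) B) (b, a) (a, a)) y)
  = be a (@fmap _ F ((b, a) : ob (prod (op B) B)) ((a, a) : ob (prod (op B) B))
          ((f, @idm B a) : @hom (prod (op B) B) (b, a) (a, a)) y) ->
  @fmap _ G ((b, b) : ob (prod (op B) B)) ((a, b) : ob (prod (op B) B))
    ((f, @idm B b) : @hom (prod (op B) B) (b, b) (a, b))
    (al b (@fmap _ F ((b, a) : ob (prod (op B) B)) ((b, b) : ob (prod (op B) B))
             ((@idm (op B) b, f) : @hom (prod (op B) B) (b, a) (b, b)) y))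
  = @fmap _ G ((b, b) : ob (prod (op B) B)) ((a, b) : ob (prod (op B) B))
    ((f, @idm B b) : @hom (prod (op B) B) (b, b) (a, b))
    (be b (@fmap _ F ((b, a) : ob (prod (op B) B)) ((b, b) : ob (prod (op B) B))
             ((@idm (op B) b, f) : @hom (prod (op B) B) (b, a) (b, b)) y)).
Proof.
  intros agree_a.
  rewrite (dcomp_dinat _ _ _ al), (dcomp_dinat _ _ _ be), agree_a.
  reflexivity.
Qed.

Section HomGammaDinaturality.

Variables (A C : Category) (Gam P : SetFunctor (Dcat A C)).
Variables (a b : ob A) (x : ob C) (e : @hom A a b).

Definition contra_shift : @hom (Bcat A C) ((b, b), x) ((a, b), x) :=
  ((e, @idm A b), @idm C x).

Lemma HomGamma_fmap_cov_shift (k : fobj Gam ((((b, a), x), x) : ob (Dcat A C))) :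
  @fmap _ (HomGamma A C Gam)
    (@pair (ob (Bcat A C)) (ob (Bcat A C)) ((a, b), x) ((b, b), x))
    (@pair (ob (Bcat A C)) (ob (Bcat A C)) ((a, b), x) ((a, b), x))
    (@idm (op (Bcat A C)) ((a, b), x), contra_shift) (@idm A b, k)
  = (e, k).
Proof.
  simpl; rewrite !comp_id_l; f_equal.
  exact (fmap_id _ Gam (((b, a), x), x) k).
Qed.

Lemma HomGamma_fmap_contra_shift (k : fobj Gam ((((b, a), x), x) : ob (Dcat A C))) :
  exists k' : fobj Gam ((((b, b), x), x) : ob (Dcat A C)),
  @fmap _ (HomGamma A C Gam)
    (@pair (ob (Bcat A C)) (ob (Bcat A C)) ((a, b), x) ((b, b), x))
    (@pair (ob (Bcat A C)) (ob (Bcat A C)) ((b, b), x) ((b, b), x))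
    (contra_shift, @idm (Bcat A C) ((b, b), x)) (@idm A b, k)
  = (@idm A b, k').
Proof.
  eexists; simpl; rewrite !comp_id_l; reflexivity.
Qed.

Lemma PDi_fmap_contra_shift (y : fobj P ((((a, b), x), x) : ob (Dcat A C))) :
  @fmap _ (PDi A C P)
    (@pair (ob (Bcat A C)) (ob (Bcat A C)) ((a, b), x) ((a, b), x))
    (@pair (ob (Bcat A C)) (ob (Bcat A C)) ((b, b), x) ((a, b), x))
    (contra_shift, @idm (Bcat A C) ((a, b), x)) y
  = y.
Proof. exact (fmap_id _ P (((a, b), x), x) y). Qed.

End HomGammaDinaturality.

Theorem mainTheorem7 (A C : Category) (Gam P : SetFunctor (Dcat A C))
  (alpha beta : Dinatural (Bcat A C) (HomGamma A C Gam) (PDi A C P)) :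
  (forall (z : ob A) (x : ob C) (k : fobj Gam ((((z, z), x), x) : ob (Dcat A C))),
      alpha (((z, z), x) : ob (Bcat A C)) (@idm A z, k)
      = beta (((z, z), x) : ob (Bcat A C)) (@idm A z, k)) ->
  forall (a b : ob A) (x : ob C) (e : @hom A a b)
         (k : fobj Gam ((((b, a), x), x) : ob (Dcat A C))),
    alpha (((a, b), x) : ob (Bcat A C)) (e, k)
    = beta (((a, b), x) : ob (Bcat A C)) (e, k).
Proof.
  intros agree_id a b x e k.
  pose proof (dinatural_agree_transfer _ _ _ alpha beta _ _
                (contra_shift A C a b x e) (@idm A b, k)) as transfer.
  rewrite !PDi_fmap_contra_shift, !HomGamma_fmap_cov_shift in transfer.
  refine (transfer _).
  destruct (HomGamma_fmap_contra_shift A C Gam a b x e k) as [k' ->].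
  apply agree_id.
Qed.
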